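(* Let $K\subset\mathbb{R}^n$ and $C\subset\mathbb{R}^m$ be nonempty, convex, closed and bounded sets, and let $f,h:\mathbb{R}^n\times\mathbb{R}^m\to\mathbb{R}$ be continuous functions such that, for every $y\in K$, $f(y,\cdot)$ and $h(y,\cdot)$ are convex, and such that $f$ takes only positive values. Fix $\varepsilon>0$ and, for $y\in K$, let $\mathcal{S}_\varepsilon(y)=\operatorname{argmin}\{h(y,z)+\varepsilon f^2(y,z)\mid z\in C\}$. Then the map $v_\varepsilon: y\mapsto\{f(y,x)\mid x\in\mathcal{S}_\varepsilon(y)\}$, defined on $K$, is single-valued, and the resulting real-valued function $v_\varepsilon:K\to\mathbb{R}$ is continuous.
   Context: $f^2(y,z)$ denotes $(f(y,z))^2$. *)

From HB Require Import structures.
From mathcomp Require Import all_boot all_order all_algebra.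
From mathcomp Require Import all_classical all_reals all_analysis.
Set Implicit Arguments. Unset Strict Implicit. Unset Printing Implicit Defensive.
Import Order.TTheory GRing.Theory Num.Theory.
Import numFieldNormedType.Exports.
Local Open Scope classical_set_scope.
Local Open Scope ring_scope.

Definition convex_set_rV (R : realType) (m : nat) (C : set 'rV[R]_m) : Prop :=
  forall x y (t : R), C x -> C y -> 0 <= t -> t <= 1 ->
    C (t *: x + (1 - t) *: y).

Definition convex_fun_rV (R : realType) (m : nat) (g : 'rV[R]_m -> R) : Prop :=
  forall x y (t : R), 0 <= t -> t <= 1 ->
    g (t *: x + (1 - t) *: y) <= t * g x + (1 - t) * g y.

Definition argmin_on (R : realType) (m : nat) (C : set 'rV[R]_m)
  (g : 'rV[R]_m -> R) : set 'rV[R]_m :=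
  [set z | C z /\ forall w, C w -> g z <= g w].

From HB Require Import structures.
From mathcomp Require Import all_boot all_order all_algebra.
From mathcomp Require Import all_classical all_reals all_analysis.
From mathcomp Require Import ring lra.
Import Order.TTheory GRing.Theory Num.Theory.
Import numFieldNormedType.Exports.
Local Open Scope classical_set_scope.
Local Open Scope ring_scope.

(* Testing the minimality of a minimizer z0 of G = H + eps F^2 against the
   midpoint of z0 and any z in C, the convexity defect of the square,
   ((a + b) / 2)^2 = (a^2 + b^2) / 2 - ((a - b) / 2)^2, shows that G grows at
   least quadratically in F z - F z0.  Hence all minimizers share the same
   value of F, and a minimizer of a uniformly close objective has nearly the
   same value of F.  Since a continuous function of (y, z) is uniformly
   continuous in y over the compact set C, the value y |-> f (y, z_y) of any
   selection of minimizers z_y is continuous. *)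

Lemma continuous_curry {T U V : topologicalType} {g : T * U -> V} (y : T) :
  continuous g -> continuous (fun z => g (y, z)).
Proof.
move=> cg z; apply: continuous_comp; last exact: cg.
by apply: cvg_pair; [exact: cvg_cst | exact: cvg_id].
Qed.

Lemma continuous_sqr_penalty {R : realType} {T : topologicalType}
    {f h : T -> R} (eps : R) :
  continuous f -> continuous h -> continuous (fun p => h p + eps * f p ^+ 2).
Proof.
move=> cf ch p; apply: cvgD; first exact: ch.
by apply: cvgM; [exact: cvg_cst | rewrite expr2; apply: cvgM; exact: cf].
Qed.

Lemma compact_near_unif_continuous {R : realType} {T U : topologicalType}
    {A : set U} {g : T * U -> R} (y : T) {e : R} :
  compact A -> continuous g -> 0 < e ->
  \forall t \near y, forall z, A z -> `|g (t, z) - g (y, z)| < e.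
Proof.
move=> cA cg e0.
(* By compactness it suffices to work near each (z, y), where both g (t, z')
   and g (y, z') are within e / 2 of g (y, z). *)
apply: ((compact_near_coveringP A).1 cA T (nbhs y)) => z Az.
have e20 : 0 < e / 2 by rewrite divr_gt0.
have near_yz : \forall q \near (z, y), `|g (y, z) - g (q.2, q.1)| < e / 2.
  have : {for (z, y), continuous (g \o (fun q : U * T => (q.2, q.1)))}.
    by apply: continuous_comp; [exact: swap_continuous | exact: cg].
  by move/cvgrPdist_lt/(_ _ e20).
have near_z : \forall q \near (z, y), `|g (y, z) - g (y, q.1)| < e / 2.
  have /cvgrPdist_lt/(_ _ e20) := continuous_curry y cg z.
  exact: (@cvg_fst _ _ (nbhs z) (nbhs y)).
apply: filterS2 near_yz near_z => -[z' t] /=.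
by rewrite !ltr_norml => /andP[? ?] /andP[? ?]; apply/andP; split; lra.
Qed.

Lemma compact_argmin_on {R : realType} {m : nat} {C : set 'rV[R]_m}
    {g : 'rV[R]_m -> R} :
  C !=set0 -> compact C -> {within C, continuous g} ->
  exists z, argmin_on C g z.
Proof.
move=> C0 cC cg; have [z Cz zmin] := compact_EVT_min C0 cC cg.
exists z; split; first by rewrite -inE.
by move=> w Cw; apply: zmin; rewrite inE.
Qed.

Lemma argmin_on_perturb {R : realType} {m : nat} {C : set 'rV[R]_m}
    {g g' : 'rV[R]_m -> R} {d : R} {z' z : 'rV[R]_m} :
  (forall w, C w -> `|g' w - g w| < d) -> argmin_on C g' z' -> C z ->
  g z' < g z + 2 * d.
Proof.
move=> gg' [Cz' z'min] Cz; have := z'min _ Cz.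
move: (gg' _ Cz) (gg' _ Cz'); rewrite !ltr_norml => /andP[? ?] /andP[? ?].
lra.
Qed.

Section SqrPenalty.
Context {R : realType} {m : nat} {C : set 'rV[R]_m} {F H : 'rV[R]_m -> R}.
Context {eps : R}.
Hypotheses (convC : convex_set_rV C) (convF : convex_fun_rV F).
Hypotheses (convH : convex_fun_rV H) (F_ge0 : forall z, C z -> 0 <= F z).

Lemma argmin_sqr_penalty_growth {z0 z : 'rV[R]_m} : 0 <= eps ->
  argmin_on C (fun w => H w + eps * F w ^+ 2) z0 -> C z ->
  eps * (F z - F z0) ^+ 2 <= 2 * ((H z + eps * F z ^+ 2) - (H z0 + eps * F z0 ^+ 2)).
Proof.
move=> eps_ge0 [Cz0 z0min] Cz.
have half_ge0 : (0 : R) <= 2^-1 by rewrite invr_ge0.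
have half_le1 : (2^-1 : R) <= 1 by rewrite invf_le1 // ler1n.
have half_half : (1 - 2^-1 : R) = 2^-1 by field.
set w := 2^-1 *: z + (1 - 2^-1) *: z0.
have Cw : C w := convC _ _ _ Cz Cz0 half_ge0 half_le1.
have := z0min _ Cw; have := F_ge0 _ Cw.
have := convH z z0 _ half_ge0 half_le1; have := convF z z0 _ half_ge0 half_le1.
rewrite -/w half_half => Fw Hw Fw_ge0 z0w.
have Fw2 : F w ^+ 2 <= (2^-1 * F z + 2^-1 * F z0) ^+ 2.
  by rewrite ler_sqr ?nnegrE //; lra.
have := ler_wpM2l eps_ge0 Fw2; lra.
Qed.

Lemma argmin_sqr_penalty_eq {z0 z1 : 'rV[R]_m} : 0 < eps ->
  argmin_on C (fun w => H w + eps * F w ^+ 2) z0 ->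
  argmin_on C (fun w => H w + eps * F w ^+ 2) z1 -> F z1 = F z0.
Proof.
move=> eps_gt0 z0min z1min.
have growth := argmin_sqr_penalty_growth (ltW eps_gt0) z0min z1min.1.
have /= z0_le := z0min.2 _ z1min.1; have /= z1_le := z1min.2 _ z0min.1.
have sqr_le0 : eps * (F z1 - F z0) ^+ 2 <= 0 by lra.
rewrite pmulr_rle0 // in sqr_le0.
by apply/eqP; rewrite -subr_eq0 -sqrf_eq0 eq_le sqr_le0 sqr_ge0.
Qed.

End SqrPenalty.

Section ParametricSqrPenalty.
Context {R : realType} {T : topologicalType} {m : nat}.
Context {K : set T} {C : set 'rV[R]_m} {f h : T * 'rV[R]_m -> R} {eps : R}.
Hypotheses (convC : convex_set_rV C) (compactC : compact C).
Hypotheses (cf : continuous f) (ch : continuous h).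
Hypothesis convf : forall y, K y -> convex_fun_rV (fun z => f (y, z)).
Hypothesis convh : forall y, K y -> convex_fun_rV (fun z => h (y, z)).
Hypothesis f_ge0 : forall y, K y -> forall z, C z -> 0 <= f (y, z).
Hypothesis eps_gt0 : 0 < eps.
Context {zopt : T -> 'rV[R]_m}.
Hypothesis zoptP : forall y, K y ->
  argmin_on C (fun z => h (y, z) + eps * f (y, z) ^+ 2) (zopt y).

Lemma argmin_sqr_penalty_value_continuous :
  {within K, continuous (fun y => f (y, zopt y))}.
Proof.
apply/subspace_continuousP => y Ky; rewrite /from_subspace.
apply/cvgrPdist_lt => e e_gt0.
set eta := eps * e ^+ 2 / 16.
have eta_gt0 : 0 < eta by rewrite divr_gt0 // mulr_gt0 // exprn_gt0.
have e2_gt0 : 0 < e / 2 by rewrite divr_gt0.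
have cg := continuous_sqr_penalty eps cf ch.
have near_g := compact_near_unif_continuous y compactC cg eta_gt0.
have near_f := compact_near_unif_continuous y compactC cf e2_gt0.
rewrite near_withinE; apply: filterS2 near_g near_f => t unif_g unif_f Kt.
have [zy zt] := (zoptP y Ky, zoptP t Kt).
have /= gap := argmin_on_perturb unif_g zt zy.1.
have /= growth := argmin_sqr_penalty_growth convC (convf y Ky) (convh y Ky)
  (f_ge0 y Ky) (ltW eps_gt0) zy zt.1.
have sqr_lt : (f (y, zopt t) - f (y, zopt y)) ^+ 2 < (e / 2) ^+ 2.
  rewrite -(ltr_pM2l eps_gt0).
  have -> : eps * (e / 2) ^+ 2 = 4 * eta by rewrite /eta; field.
  lra.
have dist_y : `|f (y, zopt t) - f (y, zopt y)| < e / 2.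
  by rewrite -ltr_sqr ?nnegrE ?normr_ge0 ?(ltW e2_gt0) // real_normK ?num_real.
have := unif_f _ zt.1; move: dist_y.
by rewrite !ltr_norml => /andP[? ?] /andP[? ?]; apply/andP; split; lra.
Qed.

End ParametricSqrPenalty.

Theorem lemma2p3 (R : realType) (n m : nat)
  (K : set 'rV[R]_n) (C : set 'rV[R]_m)
  (f h : 'rV[R]_n * 'rV[R]_m -> R) (eps : R) :
  K !=set0 -> convex_set_rV K -> closed K -> bounded_set K ->
  C !=set0 -> convex_set_rV C -> closed C -> bounded_set C ->
  continuous f -> continuous h ->
  (forall y, K y -> convex_fun_rV (fun z => f (y, z))) ->
  (forall y, K y -> convex_fun_rV (fun z => h (y, z))) ->
  (forall p, 0 < f p) ->
  0 < eps ->
  exists v : 'rV[R]_n -> R,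
    (forall y, K y ->
       [set f (y, x) | x in argmin_on C (fun z => h (y, z) + eps * (f (y, z)) ^+ 2)]
       = [set v y]) /\
    {within K, continuous v}.
Proof.
move=> _ _ _ _ C0 convC closedC boundedC cf ch convf convh f_gt0 eps_gt0.
have compactC := bounded_closed_compact boundedC closedC.
have f_ge0 y (_ : K y) z (_ : C z) : 0 <= f (y, z) := ltW (f_gt0 _).
have argmin_ex y : exists z,
    argmin_on C (fun z => h (y, z) + eps * f (y, z) ^+ 2) z.
  apply: compact_argmin_on C0 compactC _; apply: continuous_subspaceT.
  exact: continuous_curry y (continuous_sqr_penalty eps cf ch).
have [zopt zoptP] := choice argmin_ex.
exists (fun y => f (y, zopt y)); split.
  move=> y Ky; apply/seteqP; split=> [_ [z zmin <-]|_ ->] /=.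
    exact: (argmin_sqr_penalty_eq convC (convf y Ky) (convh y Ky) (f_ge0 y Ky)
      eps_gt0 (zoptP y) zmin).
  by exists (zopt y).
exact: (argmin_sqr_penalty_value_continuous convC compactC cf ch convf convh
  f_ge0 eps_gt0 (fun y _ => zoptP y)).
Qed.
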